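(* Let $\mathbb{A}$ be a 2-category and $p:e\to b$ a 1-cell such that $\mathbb{A}$ has the two-dimensional cokernel diagram of $p$ and $p$ has a codensity monad, i.e. a right Kan extension $(t,\gamma)$ of $p$ along $p$ exists. Then there is a unique 1-cell $\ell:b\uparrow_p b\to b$ such that $\ell\delta^0=\mathrm{id}_b$, $\ell\delta^1=t$ and $\mathrm{id}_\ell\ast\alpha=\gamma$; moreover the right Kan extension of $\mathrm{id}_b$ along $\delta^0$ exists and is given by the pair $(\ell,\mathrm{id}_{\mathrm{id}_b})$.
   Context: A 2-category is a $\mathbf{Cat}$-enriched category; composition of 1-cells is juxtaposition, vertical composition of 2-cells is $\cdot$, horizontal composition is $\ast$, $\mathrm{id}_f$ is the identity 2-cell on $f$. Opcomma object of $p$ along itself: an object $b\uparrow_p b$ with 1-cells $\delta^0,\delta^1:b\to b\uparrow_p b$ and a 2-cell $\alpha:\delta^1p\Rightarrow\delta^0p$ such that for every object $y$ the functor $h\mapsto(h\delta^0,h\delta^1,\mathrm{id}_h\ast\alpha)$, $\xi\mapsto(\xi\ast\mathrm{id}_{\delta^0},\xi\ast\mathrm{id}_{\delta^1})$ is an isomorphism from $\mathbb{A}(b\uparrow_p b,y)$ onto the category of triples $(h_0,h_1:b\to y,\ \beta:h_1p\Rightarrow h_0p)$ with morphisms pairs of 2-cells $(\xi_0:h_0\Rightarrow h_0',\xi_1:h_1\Rightarrow h_1')$ satisfying $(\xi_0\ast\mathrm{id}_p)\cdot\beta=\beta'\cdot(\xi_1\ast\mathrm{id}_p)$. Two-dimensional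 pushout of a span $f_0:c\to c_0$, $f_1:c\to c_1$: an object $P$ with $q_0:c_0\to P$, $q_1:c_1\to P$, $q_0f_0=q_1f_1$, such that for every $y$, $k\mapsto(kq_0,kq_1)$ is an isomorphism from $\mathbb{A}(P,y)$ onto the category of pairs $(k_0,k_1)$ with $k_0f_0=k_1f_1$, whose morphisms are pairs of 2-cells $(\xi_0,\xi_1)$ with $\xi_0\ast\mathrm{id}_{f_0}=\xi_1\ast\mathrm{id}_{f_1}$. $\mathbb{A}$ has the two-dimensional cokernel diagram of $p$ if it has an opcomma object $b\uparrow_p b$ of $p$ along itself and a two-dimensional pushout $b\uparrow_pb\uparrow_pb$ of the span $(\delta^0,\delta^1)$, with 1-cells $D^0,D^2:b\uparrow_pb\to b\uparrow_pb\uparrow_pb$ satisfying $D^2\delta^0=D^0\delta^1$. Right Kan extension of $f:z\to y$ along $g:z\to x$: a pair $(r:x\to y,\gamma:rg\Rightarrow f)$ such that for each $k:x\to y$, $\beta\mapsto\gamma\cdot(\beta\ast\mathrm{id}_g)$ is a bijection from 2-cells $k\Rightarrow r$ to 2-cells $kg\Rightarrow f$. *)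

(* A strict 2-category is presented with 2-cells carrying explicit
   boundaries (source/target 1-cells); vertical and horizontal composition
   are total operations whose axioms are only imposed on composable
   pairs.  This is equivalent to a Cat-enriched category: the hom-category
   Hom(a,b) has objects [Hom a b] and morphisms f => g the cells [c] with
   [src c = f] and [tgt c = g]; [comp]/[hcomp] give the composition functor. *)

Set Implicit Arguments.
Unset Strict Implicit.

Record TwoCat := {
  Ob : Type;
  Hom : Ob -> Ob -> Type;
  Cell : Ob -> Ob -> Type;
  src : forall a b, Cell a b -> Hom a b;
  tgt : forall a b, Cell a b -> Hom a b;
  idm : forall a, Hom a a;
  comp : forall a b c, Hom b c -> Hom a b -> Hom a c;
  id2 : forall a b, Hom a b -> Cell a b;
  (* vcomp beta alpha = beta . alpha : first alpha then beta *)
  vcomp : forall a b, Cell a b -> Cell a b -> Cell a b;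
  hcomp : forall a b c, Cell b c -> Cell a b -> Cell a c;

  comp_assoc : forall a b c d (h : Hom c d) (g : Hom b c) (f : Hom a b),
      comp h (comp g f) = comp (comp h g) f;
  comp_idl : forall a b (f : Hom a b), comp (idm b) f = f;
  comp_idr : forall a b (f : Hom a b), comp f (idm a) = f;

  src_id2 : forall a b (f : Hom a b), src (id2 f) = f;
  tgt_id2 : forall a b (f : Hom a b), tgt (id2 f) = f;
  src_vcomp : forall a b (x y : Cell a b), tgt x = src y -> src (vcomp y x) = src x;
  tgt_vcomp : forall a b (x y : Cell a b), tgt x = src y -> tgt (vcomp y x) = tgt y;
  vcomp_idl : forall a b (x : Cell a b), vcomp (id2 (tgt x)) x = x;
  vcomp_idr : forall a b (x : Cell a b), vcomp x (id2 (src x)) = x;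
  vcomp_assoc : forall a b (x y z : Cell a b),
      tgt x = src y -> tgt y = src z ->
      vcomp z (vcomp y x) = vcomp (vcomp z y) x;

  src_hcomp : forall a b c (y : Cell b c) (x : Cell a b),
      src (hcomp y x) = comp (src y) (src x);
  tgt_hcomp : forall a b c (y : Cell b c) (x : Cell a b),
      tgt (hcomp y x) = comp (tgt y) (tgt x);
  hcomp_id2 : forall a b c (g : Hom b c) (f : Hom a b),
      hcomp (id2 g) (id2 f) = id2 (comp g f);
  interchange : forall a b c (x x' : Cell a b) (y y' : Cell b c),
      tgt x = src x' -> tgt y = src y' ->
      hcomp (vcomp y' y) (vcomp x' x) = vcomp (hcomp y' x') (hcomp y x);
  hcomp_assoc : forall a b c d (z : Cell c d) (y : Cell b c) (x : Cell a b),
      hcomp z (hcomp y x) = hcomp (hcomp z y) x;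
  hcomp_idl : forall a b (x : Cell a b), hcomp (id2 (idm b)) x = x;
  hcomp_idr : forall a b (x : Cell a b), hcomp x (id2 (idm a)) = x
}.

Arguments Hom {t}.
Arguments Cell {t}.
Arguments src {t a b}.
Arguments tgt {t a b}.
Arguments idm {t}.
Arguments comp {t a b c}.
Arguments id2 {t a b}.
Arguments vcomp {t a b}.
Arguments hcomp {t a b c}.

Section Defs.
Variable A : TwoCat.

Definition cell2 {a b : Ob A} (x : Cell a b) (f g : Hom a b) : Prop :=
  src x = f /\ tgt x = g.

(* Opcomma object (P, d0, d1, alpha) of p : e -> b along itself,
   alpha : d1 p => d0 p, with the functor
   h |-> (h d0, h d1, id_h * alpha),  xi |-> (xi * id_d0, xi * id_d1)
   an isomorphism of categories (bijective on objects + fully faithful). *)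
Definition is_opcomma {e b : Ob A} (p : Hom e b)
    (P : Ob A) (d0 d1 : Hom b P) (alpha : Cell e P) : Prop :=
  cell2 alpha (comp d1 p) (comp d0 p) /\
  (forall (y : Ob A) (h0 h1 : Hom b y) (beta : Cell e y),
      cell2 beta (comp h1 p) (comp h0 p) ->
      exists! h : Hom P y,
        comp h d0 = h0 /\ comp h d1 = h1 /\ hcomp (id2 h) alpha = beta) /\
  (forall (y : Ob A) (h h' : Hom P y) (xi0 xi1 : Cell b y),
      cell2 xi0 (comp h d0) (comp h' d0) ->
      cell2 xi1 (comp h d1) (comp h' d1) ->
      vcomp (hcomp xi0 (id2 p)) (hcomp (id2 h) alpha)
        = vcomp (hcomp (id2 h') alpha) (hcomp xi1 (id2 p)) ->
      exists! xi : Cell P y,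
        cell2 xi h h' /\ hcomp xi (id2 d0) = xi0 /\ hcomp xi (id2 d1) = xi1).

Definition is_2pushout {c c0 c1 : Ob A} (f0 : Hom c c0) (f1 : Hom c c1)
    (P : Ob A) (q0 : Hom c0 P) (q1 : Hom c1 P) : Prop :=
  comp q0 f0 = comp q1 f1 /\
  (forall (y : Ob A) (k0 : Hom c0 y) (k1 : Hom c1 y),
      comp k0 f0 = comp k1 f1 ->
      exists! k : Hom P y, comp k q0 = k0 /\ comp k q1 = k1) /\
  (forall (y : Ob A) (k k' : Hom P y) (xi0 : Cell c0 y) (xi1 : Cell c1 y),
      cell2 xi0 (comp k q0) (comp k' q0) ->
      cell2 xi1 (comp k q1) (comp k' q1) ->
      hcomp xi0 (id2 f0) = hcomp xi1 (id2 f1) ->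
      exists! xi : Cell P y,
        cell2 xi k k' /\ hcomp xi (id2 q0) = xi0 /\ hcomp xi (id2 q1) = xi1).

Definition is_ran {x y z : Ob A} (f : Hom z y) (g : Hom z x)
    (r : Hom x y) (gam : Cell z y) : Prop :=
  cell2 gam (comp r g) f /\
  (forall (k : Hom x y) (dlt : Cell z y),
      cell2 dlt (comp k g) f ->
      exists! beta : Cell x y,
        cell2 beta k r /\ vcomp gam (hcomp beta (id2 g)) = dlt).

End Defs.

Arguments cell2 {A a b} x f g.
Arguments is_opcomma {A e b} p P d0 d1 alpha.
Arguments is_2pushout {A c c0 c1} f0 f1 P q0 q1.
Arguments is_ran {A x y z} f g r gam.

(* The opcomma object classifies triples (h0, h1, h1 p => h0 p), so the
   triple (id_b, t, gam) yields a unique l.  A 2-cell k d0 => id_b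
   is turned, by pasting alpha and whiskering with p, into a cell k d1 p => p,
   which the Kan property of (t, gam) factors uniquely as a cell k d1 => t;
   the two-dimensional property of the opcomma object then glues the pair
   (k d0 => l d0, k d1 => l d1) into a unique cell k => l. *)


Set Implicit Arguments.
Unset Strict Implicit.

Section TwoCells.
Variable A : TwoCat.

Lemma cell2_id2 (a b : Ob A) (f : Hom a b) : cell2 (id2 f) f f.
Proof. split; [apply src_id2 | apply tgt_id2]. Qed.

Lemma cell2_vcomp (a b : Ob A) (x y : Cell a b) (f g h : Hom a b) :
  cell2 x f g -> cell2 y g h -> cell2 (vcomp y x) f h.
Proof.
  intros [sx tx] [sy ty].
  assert (Hxy : tgt x = src y) by congruence.
  split; [rewrite src_vcomp | rewrite tgt_vcomp]; assumption.
Qed.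

Lemma cell2_hcomp (a b c : Ob A) (y : Cell b c) (x : Cell a b)
    (g g' : Hom b c) (f f' : Hom a b) :
  cell2 y g g' -> cell2 x f f' -> cell2 (hcomp y x) (comp g f) (comp g' f').
Proof.
  intros [sy ty] [sx tx].
  split; [rewrite src_hcomp | rewrite tgt_hcomp]; congruence.
Qed.

Lemma vcomp_idl_cell2 (a b : Ob A) (x : Cell a b) (f g : Hom a b) :
  cell2 x f g -> vcomp (id2 g) x = x.
Proof. intros [_ tx]. rewrite <- tx. apply vcomp_idl. Qed.

Lemma vcomp_idr_cell2 (a b : Ob A) (x : Cell a b) (f g : Hom a b) :
  cell2 x f g -> vcomp x (id2 f) = x.
Proof. intros [sx _]. rewrite <- sx. apply vcomp_idr. Qed.

Lemma hcomp_whiskerA (a b c d : Ob A) (z : Cell c d) (g : Hom b c) (f : Hom a b) :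
  hcomp (hcomp z (id2 g)) (id2 f) = hcomp z (id2 (comp g f)).
Proof. rewrite <- hcomp_assoc, hcomp_id2. reflexivity. Qed.

Lemma whisker_exchange (a b c : Ob A) (y : Cell b c) (x : Cell a b)
    (k l : Hom b c) (f g : Hom a b) :
  cell2 y k l -> cell2 x f g ->
  vcomp (hcomp (id2 l) x) (hcomp y (id2 f))
  = vcomp (hcomp y (id2 g)) (hcomp (id2 k) x).
Proof.
  intros Hy Hx.
  pose proof Hy as [sy ty]; pose proof Hx as [sx tx].
  transitivity (hcomp y x).
  - rewrite <- interchange; rewrite ?src_id2, ?tgt_id2; try congruence.
    rewrite (vcomp_idl_cell2 Hy), (vcomp_idr_cell2 Hx). reflexivity.
  - rewrite <- interchange; rewrite ?src_id2, ?tgt_id2; try congruence.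
    rewrite (vcomp_idr_cell2 Hy), (vcomp_idl_cell2 Hx). reflexivity.
Qed.

End TwoCells.

Section OpcommaRan.
Variables (A : TwoCat) (e b : Ob A) (p : Hom e b).
Variables (P : Ob A) (d0 d1 : Hom b P) (alpha : Cell e P).
Hypothesis Hop : is_opcomma p P d0 d1 alpha.
Variables (t : Hom b b) (gam : Cell e b).
Hypothesis Hran : is_ran p p t gam.
Variable l : Hom P b.
Hypotheses (Hl0 : comp l d0 = idm b) (Hl1 : comp l d1 = t)
  (Hlalpha : hcomp (id2 l) alpha = gam).

Let Halpha : cell2 alpha (comp d1 p) (comp d0 p) := proj1 Hop.

Definition paste_alpha (k : Hom P b) (dlt : Cell b b) : Cell e b :=
  vcomp (hcomp dlt (id2 p)) (hcomp (id2 k) alpha).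

Lemma cell2_paste_alpha (k : Hom P b) (dlt : Cell b b) :
  cell2 dlt (comp k d0) (idm b) ->
  cell2 (paste_alpha k dlt) (comp (comp k d1) p) p.
Proof.
  intros Hdlt.
  pose proof (cell2_hcomp Hdlt (cell2_id2 p)) as Hdltp.
  rewrite comp_idl, <- comp_assoc in Hdltp.
  rewrite <- comp_assoc.
  exact (cell2_vcomp (cell2_hcomp (cell2_id2 k) Halpha) Hdltp).
Qed.

Lemma paste_alpha_whisker_d1 (k : Hom P b) (beta : Cell P b) :
  cell2 beta k l ->
  vcomp gam (hcomp (hcomp beta (id2 d1)) (id2 p))
  = paste_alpha k (hcomp beta (id2 d0)).
Proof.
  intros Hbeta. unfold paste_alpha.
  rewrite <- Hlalpha, !hcomp_whiskerA.
  exact (whisker_exchange Hbeta Halpha).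
Qed.

Lemma opcomma_ran_d0 : is_ran (idm b) d0 l (id2 (idm b)).
Proof.
  pose proof Hop as [_ [_ Hop2]]; pose proof Hran as [_ Hran_univ].
  split; [rewrite Hl0; apply cell2_id2 |].
  intros k dlt Hdlt.
  destruct (Hran_univ _ _ (cell2_paste_alpha Hdlt))
    as [xi1 [[Hxi1 Exi1] Uxi1]].
  assert (Hdlt0 : cell2 dlt (comp k d0) (comp l d0)) by (rewrite Hl0; exact Hdlt).
  assert (Hxi1' : cell2 xi1 (comp k d1) (comp l d1)) by (rewrite Hl1; exact Hxi1).
  assert (Hcompat : vcomp (hcomp dlt (id2 p)) (hcomp (id2 k) alpha)
                    = vcomp (hcomp (id2 l) alpha) (hcomp xi1 (id2 p)))
    by (rewrite Hlalpha; symmetry; exact Exi1).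
  destruct (Hop2 _ _ _ _ _ Hdlt0 Hxi1' Hcompat)
    as [beta [[Hbeta [Ebeta0 _]] Ubeta]].
  exists beta; split.
  - split; [exact Hbeta |]. rewrite Ebeta0. exact (vcomp_idl_cell2 Hdlt).
  - intros beta' [Hbeta' Ebeta'].
    assert (E0 : hcomp beta' (id2 d0) = dlt).
    { rewrite <- Ebeta', <- Hl0. symmetry.
      exact (vcomp_idl_cell2 (cell2_hcomp Hbeta' (cell2_id2 d0))). }
    apply Ubeta; split; [exact Hbeta' |]; split; [exact E0 |].
    symmetry; apply Uxi1; split.
    + rewrite <- Hl1. exact (cell2_hcomp Hbeta' (cell2_id2 d1)).
    + rewrite <- E0. exact (paste_alpha_whisker_d1 Hbeta').
Qed.

End OpcommaRan.

Theorem proposition4p1 (A : TwoCat) (e b : Ob A) (p : Hom e b)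
    (* opcomma object b ↑_p b *)
    (P : Ob A) (d0 d1 : Hom b P) (alpha : Cell e P)
    (Hop : is_opcomma p P d0 d1 alpha)
    (* two-dimensional pushout b ↑_p b ↑_p b of the span (d0, d1) *)
    (Q : Ob A) (D0 D2 : Hom P Q)
    (Hpo : is_2pushout d0 d1 Q D2 D0)
    (* codensity monad: right Kan extension (t, gam) of p along p *)
    (t : Hom b b) (gam : Cell e b)
    (Hran : is_ran p p t gam) :
  exists l : Hom P b,
    (comp l d0 = idm b /\ comp l d1 = t /\ hcomp (id2 l) alpha = gam) /\
    (forall l' : Hom P b,
        comp l' d0 = idm b /\ comp l' d1 = t /\ hcomp (id2 l') alpha = gam ->
        l' = l) /\
    is_ran (idm b) d0 l (id2 (idm b)).
Proof.
  assert (Hgam : cell2 gam (comp t p) (comp (idm b) p)).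
  { rewrite comp_idl. exact (proj1 Hran). }
  destruct (proj1 (proj2 Hop) b (idm b) t gam Hgam) as [l [Hl Ul]].
  exists l; split; [exact Hl |]; split.
  - intros l' Hl'. symmetry. exact (Ul l' Hl').
  - destruct Hl as [Hl0 [Hl1 Hlalpha]].
    exact (opcomma_ran_d0 Hop Hran Hl0 Hl1 Hlalpha).
Qed.
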